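(* Let $k$ be an algebraically closed field of characteristic zero and $0<l<n$. Let $Y,Z\subset\mathbb P^n$ be closed subvarieties with saturated homogeneous ideals $I_Y,I_Z\subset k[x_0,\dots,x_n]$, $I_X=I_Y\cap I_Z$, with $Y\subset\{x_0=\cdots=x_{l-1}=0\}$, $Z\subset\{x_{l+1}=\cdots=x_n=0\}$ and $Y\cap Z\neq\emptyset$ (so $Y\cap Z=\{p\}$, $p$ the coordinate point of $x_l$). Fix a monomial order $\prec$ and a positive integer $m$, and let $\Sigma_{X,m}$ be the set of degree-$m$ monomials of $k[x_0,\dots,x_n]$ not in $\mathrm{in}_\prec(I_X)$, $\Sigma_{Y,m}$ the set of degree-$m$ monomials of $k[x_l,\dots,x_n]$ not in $\mathrm{in}_\prec(I_Y\cap k[x_l,\dots,x_n])$, and $\Sigma_{Z,m}$ the set of degree-$m$ monomials of $k[x_0,\dots,x_l]$ not in $\mathrm{in}_\prec(I_Z\cap k[x_0,\dots,x_l])$ (initial ideals of the intersections computed in the respective subrings). Then $\Sigma_{X,m}=\Sigma_{Y,m}\cup\Sigma_{Z,m}$ and $\Sigma_{Y,m}\cap\Sigma_{Z,m}=\{x_l^m\}$. *)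

From HB Require Import structures.
From mathcomp Require Import all_boot all_order all_algebra.
From mathcomp.multinomials Require Import mpoly.
Set Implicit Arguments. Unset Strict Implicit. Unset Printing Implicit Defensive.
Import Order.TTheory GRing.Theory.
Local Open Scope ring_scope.

(* Polynomial ring k[x_0,...,x_n] is {mpoly k[n.+1]}; variable x_i is 'X_i,
   i : 'I_n.+1; monomials x^a are 'X_[a] with exponent vectors a : 'X_{1..n.+1}. *)

Section Defs.
Variables (k : fieldType) (N : nat).
Local Notation R := {mpoly k[N]}.
Local Notation mon := 'X_{1..N}.

(* Monomial order: strict total order on monomials, multiplicative,
   with 1 the smallest monomial (hence a well-order). *)
Definition monomial_order (lt : rel mon) : Prop :=
  [/\ (forall a, ~~ lt a a),
      (forall a b c, lt a b -> lt b c -> lt a c),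
      (forall a b, a != b -> lt a b || lt b a),
      (forall a b c, lt a b -> lt (a + c)%MM (b + c)%MM)
    & (forall a, a != 0%MM -> lt 0%MM a)].

Definition is_lead (lt : rel mon) (f : R) (a : mon) : Prop :=
  a \in msupp f /\ forall b, b \in msupp f -> b != a -> lt b a.

Definition gen_ideal_in (C : R -> Prop) (S : R -> Prop) (f : R) : Prop :=
  exists gs : seq (R * R),
    (forall gs_i, gs_i \in gs -> C gs_i.1 /\ S gs_i.2) /\
    f = \sum_(gs_i <- gs) gs_i.1 * gs_i.2.

Definition initial_ideal_in (lt : rel mon) (C : R -> Prop) (J : R -> Prop) : R -> Prop :=
  gen_ideal_in C (fun g => exists f a, [/\ J f, f != 0, is_lead lt f a & g = 'X_[a]]).

Definition hcomp (d : nat) (f : R) : R :=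
  \sum_(m <- msupp f | mdeg m == d) f@_m *: 'X_[m].

(* Points of P^{N-1}: nonzero vectors of k^N (up to scaling).
   A closed subset of projective space: common zero locus of a set of
   homogeneous polynomials. *)
Definition proj_zero_locus (S : R -> Prop) (v : 'I_N -> k) : Prop :=
  (exists i, v i != 0) /\ forall f, S f -> f.@[v] = 0.

Definition proj_closed (Y : ('I_N -> k) -> Prop) : Prop :=
  exists S : R -> Prop, (forall f, S f -> exists d, f \is d.-homog) /\
    forall v, Y v <-> proj_zero_locus S v.

(* the (saturated, homogeneous) ideal of a subset Y of projective space:
   polynomials all of whose homogeneous components vanish on Y *)
Definition ideal_of (Y : ('I_N -> k) -> Prop) (f : R) : Prop :=
  forall d v, Y v -> (hcomp d f).@[v] = 0.

Definition in_vars (P : 'I_N -> bool) (f : R) : Prop :=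
  forall a, a \in msupp f -> forall i, ~~ P i -> a i = 0%N.

Definition Sigma (lt : rel mon) (P : 'I_N -> bool) (I : R -> Prop) (m : nat) (a : mon) : Prop :=
  [/\ mdeg a = m, (forall i, ~~ P i -> a i = 0%N) &
      ~ initial_ideal_in lt (in_vars P) (fun f => I f /\ in_vars P f) 'X_[a]].

End Defs.

From HB Require Import structures.
From mathcomp Require Import all_boot all_order all_algebra.
From mathcomp.multinomials Require Import mpoly.
Import GRing.Theory.
Local Open Scope ring_scope.

Set Implicit Arguments. Unset Strict Implicit. Unset Printing Implicit Defensive.

(* The point p where Y and Z meet lies on the x_l-axis, so a polynomial
   vanishing on Y (or on Z) has zero coefficient on every pure power x_l^d;
   this keeps x_l^m out of both initial ideals.  A monomial involving a
   variable below x_l and one above x_l vanishes on Y and on Z, hence lies in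
   I_X.  A monomial in x_l..x_n is a multiple of a leading monomial of I_X iff
   it is one of I_Y /\ k[x_l..x_n]: dropping from f in I_X its monomials that
   involve x_0..x_(l-1) keeps it in I_Y (those monomials vanish on Y) and keeps
   its leading monomial; conversely, on Z the only variable of
   g in I_Y /\ k[x_l..x_n] that survives is x_l, and the pure x_l-powers of g
   have zero coefficients, so g lies in I_Z.  Symmetrically for Z. *)

Section MonomialRestriction.
Variables (k : fieldType) (N : nat).
Local Notation R := {mpoly k[N]}.
Local Notation mon := 'X_{1..N}.

Definition mrestr (Q : pred mon) (f : R) : R :=
  \sum_(c <- msupp f | Q c) f@_c *: 'X_[c].

Lemma mcoeff_mrestr Q f c : (mrestr Q f)@_c = if Q c then f@_c else 0.
Proof.
rewrite /mrestr raddf_sum /= -big_filter.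
under eq_bigr do rewrite mcoeffZ mcoeffX.
have [cQf|cNQf] := boolP (c \in [seq e <- msupp f | Q e]).
  rewrite (bigD1_seq c) ?filter_uniq ?msupp_uniq //= eqxx mulr1 big1 ?addr0.
    by move: cQf; rewrite mem_filter => /andP[->].
  by move=> e /negbTE ne; rewrite ne mulr0.
rewrite big1_seq => [|e /andP[_ he]]; last first.
  by case: eqP => [ec|_]; [rewrite -ec he in cNQf | rewrite mulr0].
move: cNQf; rewrite mem_filter negb_and mcoeff_msupp negbK.
by case: (Q c) => //= /eqP.
Qed.

Lemma eq_mrestr Q1 Q2 f : Q1 =1 Q2 -> mrestr Q1 f = mrestr Q2 f.
Proof. by move=> eQ; apply: eq_bigl. Qed.

Lemma mrestr_mrestr Q1 Q2 f : mrestr Q1 (mrestr Q2 f) = mrestr (predI Q1 Q2) f.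
Proof.
apply/mpolyP => c; rewrite !mcoeff_mrestr /=.
by case: (Q1 c); case: (Q2 c).
Qed.

Lemma mrestr_pred1 e f : mrestr (pred1 e) f = f@_e *: 'X_[e].
Proof.
apply/mpolyP => c; rewrite mcoeff_mrestr mcoeffZ mcoeffX /= eq_sym.
by case: eqP => [->|]; rewrite ?mulr1 ?mulr0.
Qed.

Lemma msupp_mrestr Q f c : c \in msupp (mrestr Q f) -> Q c && (c \in msupp f).
Proof. by rewrite !mcoeff_msupp mcoeff_mrestr; case: (Q c); rewrite ?eqxx. Qed.

Lemma meval_mrestr Q f v :
  (mrestr Q f).@[v] = \sum_(c <- msupp f | Q c) f@_c * 'X_[c].@[v].
Proof. by rewrite /mrestr raddf_sum; apply: eq_bigr => c _ /=; rewrite mevalZ. Qed.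

Lemma meval_mrestr_eq Q1 Q2 f v :
    (forall c, c \in msupp f -> Q1 c != Q2 c -> 'X_[c].@[v] = 0) ->
  (mrestr Q1 f).@[v] = (mrestr Q2 f).@[v].
Proof.
move=> vanish; rewrite !meval_mrestr (big_mkcond Q1) (big_mkcond Q2).
apply: eq_big_seq => c cf; have [eQ|nQ] := eqVneq (Q1 c) (Q2 c); first by rewrite eQ.
by rewrite (vanish c cf nQ) mulr0; case: (Q1 c); case: (Q2 c).
Qed.

Lemma mevalX_eq0 (v : 'I_N -> k) (c : mon) i :
  v i = 0 -> c i != 0%N -> ('X_[c] : R).@[v] = 0.
Proof. by move=> vi0 ci0; rewrite mevalX (bigD1 i) //= vi0 expr0n (negbTE ci0) mul0r. Qed.

End MonomialRestriction.

Section Supports.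
Variables (k : fieldType) (N : nat).
Local Notation R := {mpoly k[N]}.
Local Notation mon := 'X_{1..N}.
Implicit Types (P : pred 'I_N) (a b c : mon).

Definition mvars_in (P : pred 'I_N) (c : mon) : bool :=
  [forall i, ~~ P i ==> (c i == 0%N)].

Lemma mvars_inP P c : reflect (forall i, ~~ P i -> c i = 0%N) (mvars_in P c).
Proof.
apply: (iffP forallP) => [h i /(implyP (h i))/eqP // | h i].
by apply/implyP => /h ->.
Qed.

Lemma mvars_in_le P a b : (b <= a)%MM -> mvars_in P a -> mvars_in P b.
Proof.
move=> /mnm_lepP ba /mvars_inP a0; apply/mvars_inP => i /a0 ai0.
by apply/eqP; rewrite -leqn0 -ai0 ba.
Qed.

Lemma mvars_in_sub P1 P2 c : {subset P1 <= P2} -> mvars_in P1 c -> mvars_in P2 c.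
Proof.
move=> sP /mvars_inP c0; apply/mvars_inP => i P2i; apply: c0.
by apply: contra P2i; apply: sP.
Qed.

Lemma mvars_in1 (l : 'I_N) c : mvars_in (pred1 l) c = (c == U_(l) *+ mdeg c)%MM.
Proof.
apply/mvars_inP/eqP => [c0 | -> i /= il]; last first.
  by rewrite mulmnE mnm1E eq_sym (negbTE il).
have ec : c = (U_(l) *+ c l)%MM.
  apply/mnmP => i; rewrite mulmnE mnm1E.
  have [<-|li] := eqVneq l i; first by rewrite mul1n.
  by rewrite c0 //= eq_sym.
by rewrite {2}ec mdegMn mdeg1 mul1n.
Qed.

Lemma mevalX_mvars_out P (v : 'I_N -> k) c :
  (forall i, ~~ P i -> v i = 0) -> ~~ mvars_in P c -> ('X_[c] : R).@[v] = 0.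
Proof.
move=> v0; rewrite negb_forall => /existsP[i]; rewrite negb_imply => /andP[Pi ci].
exact: mevalX_eq0 (v0 _ Pi) ci.
Qed.

Lemma in_varsX P c : mvars_in P c -> in_vars P ('X_[c] : R).
Proof. by move=> /mvars_inP c0 a; rewrite msuppX mem_seq1 => /eqP ->. Qed.

Lemma in_vars_mrestr P (f : R) : in_vars P (mrestr (mvars_in P) f).
Proof. by move=> c /msupp_mrestr /andP[/mvars_inP]. Qed.

End Supports.

Section IdealOf.
Variables (k : fieldType) (N : nat).
Local Notation R := {mpoly k[N]}.
Local Notation mon := 'X_{1..N}.
Implicit Types (W : ('I_N -> k) -> Prop) (f : R).

Lemma hcompE d f : hcomp d f = mrestr (fun c => mdeg c == d) f.
Proof. by []. Qed.

Lemma hcomp_mrestr d Q f :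
  hcomp d (mrestr Q f) = mrestr (fun c => (mdeg c == d) && Q c) f.
Proof. by rewrite hcompE mrestr_mrestr. Qed.

Lemma meval_hcomp_mrestr d Q f v :
    (forall c, c \in msupp f -> ~~ Q c -> ('X_[c] : R).@[v] = 0) ->
  (hcomp d (mrestr Q f)).@[v] = (hcomp d f).@[v].
Proof.
move=> vanish; rewrite hcomp_mrestr hcompE; apply: meval_mrestr_eq => c cf.
by case: (Q c) (vanish c cf); rewrite ?andbT ?andbF ?eqxx // => ->.
Qed.

Lemma ideal_of_mrestr W Q f :
    (forall v, W v -> forall c, c \in msupp f -> ~~ Q c -> ('X_[c] : R).@[v] = 0) ->
  ideal_of W (mrestr Q f) <-> ideal_of W f.
Proof.
move=> vanish; split=> fW d v Wv; have := fW d v Wv.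
  by rewrite (meval_hcomp_mrestr _ (vanish v Wv)).
by rewrite (meval_hcomp_mrestr _ (vanish v Wv)).
Qed.

Lemma ideal_ofX W (a : mon) :
  (forall v, W v -> ('X_[a] : R).@[v] = 0) -> ideal_of W ('X_[a] : R).
Proof.
move=> vanish d v /vanish Xa0; rewrite hcompE meval_mrestr big1_seq // => c.
by rewrite msuppX mem_seq1 => /andP[_ /eqP ->]; rewrite Xa0 mulr0.
Qed.

Lemma mcoeff_ideal_of_axis W (p : 'I_N -> k) l f d :
    W p -> (forall i, i != l -> p i = 0) -> p l != 0 ->
  ideal_of W f -> f@_(U_(l) *+ d) = 0.
Proof.
move=> Wp p0 pl fW; have := fW d p Wp.
have vanish c : c \in msupp f -> ~~ mvars_in (pred1 l) c -> ('X_[c] : R).@[p] = 0.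
  by move=> _; apply: mevalX_mvars_out.
rewrite -(meval_hcomp_mrestr _ vanish) hcomp_mrestr.
rewrite (@eq_mrestr _ _ _ (pred1 (U_(l) *+ d)%MM)) => [|c /=]; last first.
  rewrite mvars_in1; apply/andP/eqP => [[/eqP <- /eqP //] | ->].
  by rewrite mdegMn mdeg1 mul1n eqxx.
rewrite mrestr_pred1 mevalZ -mpolyXn rmorphXn /= mevalXU.
by move/eqP; rewrite mulf_eq0 (negbTE (expf_neq0 _ pl)) orbF => /eqP.
Qed.

End IdealOf.

Section InitialIdeal.
Variables (k : fieldType) (N : nat) (lt : rel 'X_{1..N}).
Local Notation R := {mpoly k[N]}.
Local Notation mon := 'X_{1..N}.

Lemma is_lead_neq0 (f : R) b : is_lead lt f b -> f != 0.
Proof. by case=> fb _; apply: contraTneq fb => ->; rewrite msupp0. Qed.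

Lemma is_leadX (a : mon) : is_lead lt ('X_[a] : R) a.
Proof. by split=> [|b]; rewrite msuppX mem_seq1 // => ->. Qed.

Lemma is_lead_mrestr (Q : pred mon) (f : R) b :
  is_lead lt f b -> Q b -> is_lead lt (mrestr Q f) b.
Proof.
case=> fb lead Qb; split=> [|c /msupp_mrestr /andP[_]]; last exact: lead.
by rewrite mcoeff_msupp mcoeff_mrestr Qb -mcoeff_msupp.
Qed.

Definition lead_divides (J : R -> Prop) (a : mon) : Prop :=
  exists f b, [/\ J f, f != 0, is_lead lt f b & (b <= a)%MM].

Lemma initial_ideal_inX (P : pred 'I_N) (J : R -> Prop) (a : mon) : mvars_in P a ->
  initial_ideal_in lt (in_vars P) J 'X_[a] <-> lead_divides J a.
Proof.
move=> Pa; split=> [[gs [gsJ Xa]] | [f [b [Jf f0 lead ba]]]]; last first.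
  exists [:: ('X_[a - b], 'X_[b])]; split.
    move=> g; rewrite mem_seq1 => /eqP -> /=; split.
      exact/in_varsX/(mvars_in_le (lem_subr _ _)).
    by exists f, b.
  by rewrite big_seq1 /= -mpolyXD submK.
have /hasP[[g h] /gsJ[_ [f [b [Jf f0 lead ->]]]] /=] :
    has (fun gh => (gh.1 * gh.2)@_a != 0) gs.
  apply: contraT => /hasPn gs0; have : ('X_[a] : R)@_a = 0.
    by rewrite Xa raddf_sum big1_seq // => gh /gs0/negbNE/eqP.
  by rewrite mcoeffX eqxx => /eqP; rewrite oner_eq0.
rewrite -mcoeff_msupp (perm_mem (msuppMX _ _)) => /mapP[c _ ->].
by exists f, b; split=> //; apply: lem_addr.
Qed.

Lemma SigmaT_monomial_in_ideal (I : R -> Prop) m (a : mon) :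
  I 'X_[a] -> ~ Sigma lt (fun _ => true) I m a.
Proof.
move=> Ia [_ _]; apply; apply/(initial_ideal_inX _ (a := a)); first exact/mvars_inP.
exists ('X_[a] : R), a; split=> //; last exact: lepm_refl.
- exact: is_lead_neq0 (is_leadX a).
- exact: is_leadX.
Qed.

End InitialIdeal.

Section Slice.
Variables (k : fieldType) (N : nat) (lt : rel 'X_{1..N}).
Local Notation R := {mpoly k[N]}.
Local Notation mon := 'X_{1..N}.
Variables (W1 W2 : ('I_N -> k) -> Prop) (P : pred 'I_N) (l : 'I_N) (p : 'I_N -> k).
Hypothesis W1_P : forall v, W1 v -> forall i, ~~ P i -> v i = 0.
Hypothesis W2_P : forall v, W2 v -> forall i, P i -> i != l -> v i = 0.
Hypothesis W1p : W1 p.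
Hypothesis p_axis : forall i, i != l -> p i = 0.
Hypothesis pl_neq0 : p l != 0.

Lemma ideal_of_in_vars (g : R) : ideal_of W1 g -> in_vars P g -> ideal_of W2 g.
Proof.
move=> gW1 gP.
have axis0 : mrestr (mvars_in (pred1 l)) g = 0.
  apply/mpolyP => c; rewrite mcoeff_mrestr mcoeff0 mvars_in1.
  by case: eqP => // ->; apply: (mcoeff_ideal_of_axis _ W1p p_axis pl_neq0 gW1).
have vanish v : W2 v -> forall c, c \in msupp g ->
    ~~ mvars_in (pred1 l) c -> ('X_[c] : R).@[v] = 0.
  move=> W2v c gc; rewrite negb_forall => /existsP[i].
  rewrite negb_imply => /andP[il ci].
  have Pi : P i by apply: contraTT ci => /(gP c gc i) ->.
  exact: mevalX_eq0 (W2_P W2v Pi il) ci.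
apply/(ideal_of_mrestr vanish); rewrite axis0 => d v _.
by rewrite hcompE meval_mrestr msupp0 big_nil.
Qed.

Lemma lead_divides_slice (I : R -> Prop) (a : mon) :
    (forall f, I f <-> ideal_of W1 f /\ ideal_of W2 f) -> mvars_in P a ->
  lead_divides lt (fun f => I f /\ in_vars (fun _ => true) f) a <->
  lead_divides lt (fun f => ideal_of W1 f /\ in_vars P f) a.
Proof.
move=> I12 Pa.
split=> [[f [b [[/I12[fW1 _] _] _ lead ba]]] | [g [b [[gW1 gP] g0 lead ba]]]].
  have Pb := mvars_in_le ba Pa.
  have vanish v : W1 v -> forall c, c \in msupp f ->
      ~~ mvars_in P c -> ('X_[c] : R).@[v] = 0.
    by move=> W1v c _; apply/mevalX_mvars_out/W1_P.
  exists (mrestr (mvars_in P) f), b; split=> //.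
  - by split; [apply/(ideal_of_mrestr vanish) | apply: in_vars_mrestr].
  - exact: is_lead_neq0 (is_lead_mrestr lead Pb).
  - exact: is_lead_mrestr.
exists g, b; split=> //; split=> //.
by apply/I12; split=> //; apply: ideal_of_in_vars.
Qed.

Lemma Sigma_slice (I : R -> Prop) m (a : mon) :
    (forall f, I f <-> ideal_of W1 f /\ ideal_of W2 f) -> mvars_in P a ->
  Sigma lt (fun _ => true) I m a <-> Sigma lt P (ideal_of W1) m a.
Proof.
move=> I12 Pa; have eq_lead := lead_divides_slice I12 Pa.
have inT : mvars_in (fun _ => true) a by apply/mvars_inP.
split=> -[am _ nI]; split=> //.
- exact/mvars_inP.
- by move=> /(initial_ideal_inX _ _ Pa)/eq_lead/(initial_ideal_inX _ _ inT).
- by move=> /(initial_ideal_inX _ _ inT)/eq_lead/(initial_ideal_inX _ _ Pa).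
Qed.

Lemma Sigma_axis m : P l -> Sigma lt P (ideal_of W1) m (U_(l) *+ m).
Proof.
move=> Pl; have axis_l : mvars_in (pred1 l) (U_(l) *+ m)%MM.
  by rewrite mvars_in1 mdegMn mdeg1 mul1n.
have Pa : mvars_in P (U_(l) *+ m)%MM.
  by apply: mvars_in_sub axis_l => i /eqP ->.
split; [by rewrite mdegMn mdeg1 mul1n | exact/mvars_inP |].
rewrite (initial_ideal_inX _ _ Pa) => -[f [b [[fW1 _] _ [fb _] ba]]].
have eb : b = (U_(l) *+ mdeg b)%MM.
  by apply/eqP; rewrite -mvars_in1; apply: mvars_in_le ba axis_l.
by move: fb; rewrite mcoeff_msupp eb (mcoeff_ideal_of_axis _ W1p p_axis) ?eqxx.
Qed.

End Slice.

Section TwoComponents.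
Variables (k : fieldType) (n : nat) (lt : rel 'X_{1..n.+1}) (m : nat) (l : 'I_n.+1).
Variables (Y Z : ('I_n.+1 -> k) -> Prop) (p : 'I_n.+1 -> k).
Hypothesis Y_low : forall v, Y v -> forall i : 'I_n.+1, (i < l)%N -> v i = 0.
Hypothesis Z_high : forall v, Z v -> forall i : 'I_n.+1, (l < i)%N -> v i = 0.
Hypotheses (Yp : Y p) (Zp : Z p) (pl_neq0 : p l != 0).

Local Notation upper := (fun i : 'I_n.+1 => (l <= i)%N).
Local Notation lower := (fun i : 'I_n.+1 => (i <= l)%N).
Local Notation I_X := (fun f => ideal_of Y f /\ ideal_of Z f).

Lemma axis_point i : i != l -> p i = 0.
Proof.
case: (ltngtP i l) => [/(Y_low Yp) | /(Z_high Zp) | /val_inj ->] //.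
by rewrite eqxx.
Qed.

Lemma Y_off_upper v : Y v -> forall i, ~~ upper i -> v i = 0.
Proof. by move=> Yv i /=; rewrite -ltnNge; exact: Y_low. Qed.

Lemma Z_off_lower v : Z v -> forall i, ~~ lower i -> v i = 0.
Proof. by move=> Zv i /=; rewrite -ltnNge; exact: Z_high. Qed.

Lemma Y_on_lower v : Y v -> forall i, lower i -> i != l -> v i = 0.
Proof.
move=> Yv i /=; rewrite leq_eqVlt => /orP[/eqP/val_inj -> | /(Y_low Yv) //].
by rewrite eqxx.
Qed.

Lemma Z_on_upper v : Z v -> forall i, upper i -> i != l -> v i = 0.
Proof.
move=> Zv i /=; rewrite leq_eqVlt => /orP[/eqP/val_inj <- | /(Z_high Zv) //].
by rewrite eqxx.
Qed.

Lemma Sigma_union a :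
  Sigma lt (fun _ => true) I_X m a <->
  Sigma lt upper (ideal_of Y) m a \/ Sigma lt lower (ideal_of Z) m a.
Proof.
have SY := Sigma_slice lt Y_off_upper Z_on_upper Yp axis_point pl_neq0 m
  (I := I_X) (fun f => iff_refl _).
have SZ := Sigma_slice lt Z_off_lower Y_on_lower Zp axis_point pl_neq0 m
  (I := I_X) (fun f => and_comm _ _).
split=> [SXa | [SYa | SZa]].
- have [PYa|NPYa] := boolP (mvars_in upper a); first by left; apply/(SY a PYa).
  have [PZa|NPZa] := boolP (mvars_in lower a); first by right; apply/(SZ a PZa).
  exfalso; apply: (SigmaT_monomial_in_ideal _ SXa).
  split; apply: ideal_ofX => v Wv.
  + exact: mevalX_mvars_out (Y_off_upper Wv) NPYa.
  + exact: mevalX_mvars_out (Z_off_lower Wv) NPZa.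
- by have [_ /mvars_inP PYa _] := SYa; apply/(SY a PYa).
- by have [_ /mvars_inP PZa _] := SZa; apply/(SZ a PZa).
Qed.

Lemma Sigma_inter a :
  Sigma lt upper (ideal_of Y) m a /\ Sigma lt lower (ideal_of Z) m a <->
  a = (U_(l) *+ m)%MM.
Proof.
split=> [[[am aY _] [_ aZ _]] | ->].
  apply/eqP; rewrite -am -mvars_in1; apply/mvars_inP => i /= il.
  case: (ltngtP i l) => [li | li | /val_inj eil].
  - by apply: aY; rewrite -ltnNge.
  - by apply: aZ; rewrite -ltnNge.
  - by rewrite eil eqxx in il.
split; apply: Sigma_axis axis_point pl_neq0 m _ => //.
Qed.

End TwoComponents.

Theorem lemma3p3
  (k : closedFieldType) (char0 : [pchar k] =i pred0)
  (n : nat) (l : 'I_n.+1) (hl0 : (0 < l)%N) (hln : (l < n)%N)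
  (Y Z : ('I_n.+1 -> k) -> Prop)
  (hY : proj_closed (k:=k) Y) (hZ : proj_closed (k:=k) Z)
  (hYsub : forall v, Y v -> forall i : 'I_n.+1, (i < l)%N -> v i = 0)
  (hZsub : forall v, Z v -> forall i : 'I_n.+1, (l < i)%N -> v i = 0)
  (hYZ : exists v, Y v /\ Z v)
  (lt : rel 'X_{1..n.+1}) (hlt : monomial_order lt)
  (m : nat) (hm : (0 < m)%N) :
  let I_Y := ideal_of (k:=k) Y in
  let I_Z := ideal_of (k:=k) Z in
  let I_X := fun f => I_Y f /\ I_Z f in
  let SigmaX := Sigma lt (fun _ => true) I_X m in
  let SigmaY := Sigma lt (fun i : 'I_n.+1 => (l <= i)%N) I_Y m in
  let SigmaZ := Sigma lt (fun i : 'I_n.+1 => (i <= l)%N) I_Z m in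
  (forall a, SigmaX a <-> SigmaY a \/ SigmaZ a) /\
  (forall a, SigmaY a /\ SigmaZ a <-> a = (U_(l) *+ m)%MM).
Proof.
move=> I_Y I_Z I_X SigmaX SigmaY SigmaZ.
have [p [Yp Zp]] := hYZ.
have pl_neq0 : p l != 0.
  have [S [_ YS]] := hY; have [[i pi] _] := (YS p).1 Yp.
  have [<- //|il] := eqVneq i l.
  by rewrite (axis_point hYsub hZsub Yp Zp il) eqxx in pi.
split=> a.
- exact: Sigma_union hYsub hZsub Yp Zp pl_neq0 a.
- exact: Sigma_inter hYsub hZsub Yp Zp pl_neq0 a.
Qed.
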